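(* Identify the graded dual $\mathcal{A}^{\circledast}=\bigoplus_n(\mathbb K T_n)^*$ with $\mathcal{A}$ via the pairing $\langle t,s\rangle=\delta_{t,s}$ on trees. Let $\Delta$ on $\mathcal A^{\circledast}$ be the transpose of $*$, i.e. $\langle\Delta(t),u\otimes v\rangle=\langle t,u*v\rangle$ for all trees $u,v$, and for $\ltimes\in\{\prec,\cdot,\succ\}$ and a tree $t\ne|$ let $\Delta_\ltimes(t)$ be defined by $\langle\Delta_\ltimes(t),u\otimes v\rangle=\langle t,u\ltimes v\rangle$ for all trees $u,v$ not both equal to $|$. Then for every tree $t\neq|$ with $N$ leaves, $$\Delta(t)=\sum_{m=1}^{N}{}^m t\otimes t^m,$$ and $\Delta_\prec(t)$ (resp. $\Delta_\succ(t)$, resp. $\Delta_\cdot(t)$) is the sum of the terms ${}^mt\otimes t^m$ for which the path from the root to the $m$-th leaf leaves the root vertex through its right-most child (resp. through its left-most child, resp. through a child which is neither the left-most nor the right-most).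
   Context: Trees: planar rooted trees in which every internal vertex has at least two children; the root vertex hangs from a trunk edge; leaves are edges without upper vertex; $|$ is the one-leaf tree; $T_n$ = trees with $n+1$ leaves; $\mathcal A=\bigoplus_n\mathbb K T_n$. Products on $\mathcal A$: $x_0\vee\cdots\vee x_k$ ($k\ge1$) grafts trees left to right on a new root vertex; for $x=x^{(0)}\vee\cdots\vee x^{(k)}$, $y=y^{(0)}\vee\cdots\vee y^{(l)}$: $x\prec y=x^{(0)}\vee\cdots\vee x^{(k-1)}\vee(x^{(k)}*y)$, $x\cdot y=x^{(0)}\vee\cdots\vee x^{(k-1)}\vee(x^{(k)}*y^{(0)})\vee y^{(1)}\vee\cdots\vee y^{(l)}$, $x\succ y=(x*y^{(0)})\vee y^{(1)}\vee\cdots\vee y^{(l)}$, $*=\prec+\cdot+\succ$, $|*z=z*|=z$; augmented conventions for $a\ne|$: $|\prec a=0$, $a\prec|=a$, $|\succ a=a$, $a\succ|=0$, $|\cdot a=a\cdot|=0$. Lightning splitting: number the leaves of $t$ from $1$ to $N$ left to right and let $\gamma_m$ be the path from the root to leaf $m$. ${}^mt$ is obtained by deleting, at every internal vertex of $\gamma_m$, all subtrees hanging from children strictly to the right of $\gamma_m$, then contracting every vertex left with a single child; $t^m$ is obtained likewise by deleting everything strictly to the left of $\gamma_m$. Thus ${}^mt$ has $m$ leaves and $t^m$ has $N-m+1$ leaves. *)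

From HB Require Import structures.
From Stdlib Require List.
From mathcomp Require Import all_boot all_order all_algebra.
Set Implicit Arguments. Unset Strict Implicit. Unset Printing Implicit Defensive.

(* A planar rooted tree: [Node [::]] is the one-leaf tree |; [Node cs] with
   [cs = [:: c0; ...; ck]] is the grafting c0 \/ ... \/ ck on a new root. *)
Inductive tree : Type := Node of seq tree.

Definition leaf : tree := Node [::].

Definition children (t : tree) : seq tree := let: Node cs := t in cs.

Fixpoint tree_ind' (P : tree -> Prop)
  (H : forall cs, (forall c, List.In c cs -> P c) -> P (Node cs)) (t : tree) : P t :=
  match t with
  | Node cs => H cs
      ((fix go (l : seq tree) : forall c, List.In c l -> P c :=
          match l with
          | [::] => fun c (h : List.In c [::]) => False_ind _ h
          | a :: l' => fun c h =>
              match h with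
              | or_introl e => eq_ind a P (tree_ind' H a) c e
              | or_intror h' => go l' c h'
              end
          end) cs)
  end.

Fixpoint tree_enc (t : tree) : GenTree.tree unit :=
  let: Node cs := t in GenTree.Node 0 (map tree_enc cs).
Fixpoint tree_dec (g : GenTree.tree unit) : tree :=
  match g with
  | GenTree.Leaf _ => Node [::]
  | GenTree.Node _ l => Node (map tree_dec l)
  end.
Lemma tree_encK : cancel tree_enc tree_dec.
Proof.
move=> t; elim/tree_ind': t => cs IH /=; congr Node.
elim: cs IH => //= a l IHl H; rewrite H; last by left.
by rewrite IHl // => c hc; apply: H; right.
Qed.
HB.instance Definition _ := Countable.copy tree (can_type tree_encK).

Fixpoint wf (t : tree) : bool :=
  let: Node cs := t in (size cs != 1%N) && all wf cs.

Fixpoint tsize (t : tree) : nat :=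
  let: Node cs := t in (sumn (map tsize cs)).+1.

Fixpoint nleaves (t : tree) : nat :=
  let: Node cs := t in if cs is [::] then 1%N else sumn (map nleaves cs).

(* A formal sum with nonnegative integer coefficients is represented by a
   sequence of trees; the coefficient of a tree is its multiplicity. *)

Definition init_ch (cs : seq tree) := take (size cs).-1 cs.
Definition last_ch (cs : seq tree) := last leaf cs.
Definition first_ch (cs : seq tree) := head leaf cs.

Section Products.
Variable rec : tree -> tree -> seq tree.

Definition prec_with (x y : tree) : seq tree :=
  let xs := children x in let ys := children y in
  if xs is [::] then [::]
  else if ys is [::] then [:: x]
  else [seq Node (rcons (init_ch xs) z) | z <- rec (last_ch xs) y].

Definition dot_with (x y : tree) : seq tree :=
  let xs := children x in let ys := children y in
  if xs is [::] then [::]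
  else if ys is [::] then [::]
  else [seq Node (init_ch xs ++ z :: behead ys) | z <- rec (last_ch xs) (first_ch ys)].

Definition succ_with (x y : tree) : seq tree :=
  let xs := children x in let ys := children y in
  if ys is [::] then [::]
  else if xs is [::] then [:: y]
  else [seq Node (z :: behead ys) | z <- rec x (first_ch ys)].

Definition star_with (x y : tree) : seq tree :=
  if children x is [::] then [:: y]
  else if children y is [::] then [:: x]
  else prec_with x y ++ dot_with x y ++ succ_with x y.
End Products.

Fixpoint star_fuel (n : nat) : tree -> tree -> seq tree :=
  match n with
  | 0 => fun _ _ => [::]
  | n'.+1 => star_with (star_fuel n')
  end.

(* The fuel tsize x + tsize y suffices: every recursive call strictly
   decreases the total number of vertices. *)
Definition star (x y : tree) : seq tree := star_fuel (tsize x + tsize y) x y.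
Definition prec (x y : tree) : seq tree := prec_with star x y.
Definition dotp (x y : tree) : seq tree := dot_with star x y.
Definition succ (x y : tree) : seq tree := succ_with star x y.

(* Leaves are numbered 1..N from left to right.  [root_child t m] is the
   (0-based) index of the child of the root through which the path from the
   root to leaf m leaves the root vertex. *)
Definition root_child (t : tree) (m : nat) : nat :=
  (fix go (cs : seq tree) (m : nat) (j : nat) : nat :=
     match cs with
     | [::] => j
     | c :: cs' => if m <= nleaves c then j else go cs' (m - nleaves c) j.+1
     end) (children t) m 0.

(* ^m t : delete everything strictly right of the path, contract unary vertices *)
Fixpoint lsplit (t : tree) (m : nat) : tree :=
  let: Node cs := t in
  if cs is [::] then t else
  (fix go (acc : seq tree) (cs : seq tree) (m : nat) : tree :=
     match cs with
     | [::] => leaf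
     | c :: cs' =>
         if m <= nleaves c then
           (if acc is [::] then lsplit c m else Node (rcons acc (lsplit c m)))
         else go (rcons acc c) cs' (m - nleaves c)
     end) [::] cs m.

(* t^m : delete everything strictly left of the path, contract unary vertices *)
Fixpoint rsplit (t : tree) (m : nat) : tree :=
  let: Node cs := t in
  if cs is [::] then t else
  (fix go (cs : seq tree) (m : nat) : tree :=
     match cs with
     | [::] => leaf
     | c :: cs' =>
         if m <= nleaves c then
           (if cs' is [::] then rsplit c m else Node (rsplit c m :: cs'))
         else go cs' (m - nleaves c)
     end) cs m.

From Pilot Require Import Defs.
From HB Require Import structures.
From mathcomp Require Import all_boot all_order all_algebra.
From mathcomp Require Import zify.

(** Number the children of the root [c_0, ..., c_k]. A leaf
    of [t] at position [m'] in [c_j] splits [t] into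
    [c_0 \/ ... \/ c_(j-1) \/ ^m'c_j] and [c_j^m' \/ c_(j+1) \/ ... \/ c_k]
    (an empty side contributes nothing). Dually, unfolding the recursive
    products, [t] occurs in [u < v] (resp. [u . v], [u > v]) once for each
    occurrence of its last child (resp. of a middle child, of its first child)
    in the star product of the inner branches of [u] and [v], the remaining
    branches of [u] and [v] being the other children of [t]. The induction
    hypothesis for that child matches these occurrences with the leaves of [t]
    lying in it, and the three cases add up to [*] because every leaf lies in
    exactly one child. The factors [|] are separate: [^m t = |] only for
    [m = 1], where [t^1 = t], and symmetrically. *)

Lemma take_eq_nil (T : eqType) j (s : seq T) :
  (take j s == [::]) = (j == 0) || (s == [::]).
Proof. by case: j; case: s. Qed.

Lemma drop_eq_nil (T : eqType) j (s : seq T) : (drop j s == [::]) = (size s <= j).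
Proof. by rewrite -size_eq0 size_drop subn_eq0. Qed.

Lemma eq_cat_cons (T : eqType) x0 (s s1 s2 : seq T) z : s2 != [::] ->
  (s == s1 ++ z :: s2) =
  [&& take (size s1) s == s1, nth x0 s (size s1) == z & drop (size s1).+1 s == s2].
Proof.
move=> s2_nz; case: (ltnP (size s1) (size s)) => [lt_s1 | le_s].
  rewrite -{1}(cat_take_drop (size s1) s) (drop_nth x0 lt_s1).
  by rewrite eqseq_cat ?size_takel ?(ltnW lt_s1) // eqseq_cons.
rewrite drop_oversize ?(leq_trans le_s) // [[::] == _]eq_sym (negbTE s2_nz) !andbF.
apply/negbTE; apply: contraTneq le_s => ->.
by rewrite size_cat /= -ltnNge addnS ltnS leq_addr.
Qed.

Lemma count_andl T (b : bool) (P : pred T) s :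
  count (fun x => b && P x) s = b * count P s.
Proof. by case: b; rewrite ?mul1n ?mul0n //; apply: count_pred0. Qed.

Lemma count_and3r T (P Q : pred T) (b : bool) s :
  count (fun x => [&& P x, Q x & b]) s = b * count (fun x => P x && Q x) s.
Proof. by rewrite -count_andl; apply: eq_count => x; rewrite andbA andbC. Qed.

Lemma count_eq_pred0 T (P : pred T) s : P =1 pred0 -> count P s = 0.
Proof. by move/eq_count->; apply: count_pred0. Qed.

Lemma eq_Node xs ys : (Node xs == Node ys) = (xs == ys).
Proof. by apply/eqP/eqP => [[]|->]. Qed.

Lemma mem_In {c : tree} {cs} : c \in cs -> List.In c cs.
Proof. by elim: cs => //= a cs IH; rewrite inE => /predU1P[-> | /IH]; [left | right]. Qed.

Lemma wf_child {cs c} : wf (Node cs) -> c \in cs -> wf c.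
Proof. by case/andP => _ /allP; apply. Qed.

Lemma wf_size_gt1 {cs} : wf (Node cs) -> cs != [::] -> 1 < size cs.
Proof. by case/andP; case: cs => // a []. Qed.

Lemma mem_last_ch cs : cs != [::] -> last_ch cs \in cs.
Proof. by case: cs => // c cs _; rewrite /last_ch /= mem_last. Qed.

Lemma mem_first_ch cs : cs != [::] -> first_ch cs \in cs.
Proof. by case: cs => // c cs _; apply: mem_head. Qed.

Lemma rcons_init_last {cs} : cs != [::] -> rcons (init_ch cs) (last_ch cs) = cs.
Proof.
case/lastP: cs => // cs c _.
by rewrite /init_ch /last_ch size_rcons last_rcons /= -!cats1 take_size_cat.
Qed.

Lemma first_ch_behead {cs} : cs != [::] -> first_ch cs :: behead cs = cs.
Proof. by case: cs. Qed.

Lemma size_init_ch (cs : seq tree) : size (init_ch cs) = (size cs).-1.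
Proof. by rewrite /init_ch size_takel // leq_pred. Qed.

Lemma tsize_gt0 t : 0 < Defs.tsize t.
Proof. by case: t. Qed.

Lemma tsize_child c cs : c \in cs -> Defs.tsize c < Defs.tsize (Node cs).
Proof.
rewrite /= ltnS; elim: cs => //= a cs IH; rewrite inE => /predU1P[-> | /IH]; lia.
Qed.

Lemma star_with_ext r1 r2 x y :
  (forall a b, Defs.tsize a + Defs.tsize b < Defs.tsize x + Defs.tsize y ->
     r1 a b = r2 a b) ->
  star_with r1 x y = star_with r2 x y.
Proof.
case: x y => [[|a l]] [[|b l']] // eq_r.
have /tsize_child := mem_last_ch (a :: l) isT.
have /tsize_child := mem_first_ch (b :: l') isT.
by rewrite /star_with /prec_with /dot_with /succ_with /= => *; rewrite !eq_r //=; lia.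
Qed.

Lemma star_fuel_stable n m x y :
  Defs.tsize x + Defs.tsize y <= n -> Defs.tsize x + Defs.tsize y <= m ->
  star_fuel n x y = star_fuel m x y.
Proof.
elim: n m x y => [|n IH] [|m] x y le_n le_m; have := tsize_gt0 x; try lia.
by move=> _ /=; apply: star_with_ext => a b lt_ab; apply: IH; lia.
Qed.

Lemma starE x y : star x y = star_with star x y.
Proof.
rewrite /star; case E: (Defs.tsize x + Defs.tsize y) => [|n].
  by have := tsize_gt0 x; lia.
by apply: star_with_ext => a b lt_ab; apply: star_fuel_stable; lia.
Qed.

Arguments star : simpl never.

Lemma star_leafl v : star leaf v = [:: v].
Proof. by rewrite starE. Qed.

Lemma star_leafr u : star u leaf = [:: u].
Proof. by rewrite starE; case: u => [[]]. Qed.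

Lemma star_Node us vs : us != [::] -> vs != [::] ->
  star (Node us) (Node vs) =
  prec (Node us) (Node vs) ++ dotp (Node us) (Node vs) ++ succ (Node us) (Node vs).
Proof. by rewrite starE; case: us => //; case: vs. Qed.

Lemma prec_leafl v : prec leaf v = [::].
Proof. by []. Qed.

Lemma precE us v : us != [::] ->
  prec (Node us) v = [seq Node (rcons (init_ch us) z) | z <- star (last_ch us) v].
Proof.
case: us => // a l nz; case: v => [[|b l']] //.
by rewrite star_leafr /= rcons_init_last.
Qed.

Lemma succ_leafr u : succ u leaf = [::].
Proof. by []. Qed.

Lemma succE u vs : vs != [::] ->
  succ u (Node vs) = [seq Node (z :: behead vs) | z <- star u (first_ch vs)].
Proof. by case: vs => // b l' _; case: u => [[|a l]] //; rewrite star_leafl. Qed.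

Lemma dotp_leafl v : dotp leaf v = [::].
Proof. by []. Qed.

Lemma dotp_leafr u : dotp u leaf = [::].
Proof. by case: u => [[]]. Qed.

Lemma dotpE us vs : us != [::] -> vs != [::] ->
  dotp (Node us) (Node vs) =
  [seq Node (init_ch us ++ z :: behead vs) | z <- star (last_ch us) (first_ch vs)].
Proof. by case: us => //; case: vs. Qed.

Lemma leaf_notin_star us vs : us != [::] -> vs != [::] ->
  leaf \notin star (Node us) (Node vs).
Proof.
move=> us_nz vs_nz; rewrite star_Node // precE // dotpE // succE // !mem_cat.
by apply/or3P => -[] /mapP[z _] [] //; case: (init_ch us).
Qed.

(* The anonymous fixpoints in the bodies of [lsplit], [rsplit] and
   [root_child], named so that they can be reasoned about by induction. *)
Fixpoint lsplit_seq (acc cs : seq tree) (m : nat) : tree :=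
  match cs with
  | [::] => leaf
  | c :: cs' =>
      if m <= nleaves c then
        (if acc is [::] then lsplit c m else Node (rcons acc (lsplit c m)))
      else lsplit_seq (rcons acc c) cs' (m - nleaves c)
  end.

Fixpoint rsplit_seq (cs : seq tree) (m : nat) : tree :=
  match cs with
  | [::] => leaf
  | c :: cs' =>
      if m <= nleaves c then
        (if cs' is [::] then rsplit c m else Node (rsplit c m :: cs'))
      else rsplit_seq cs' (m - nleaves c)
  end.

Fixpoint root_child_seq (cs : seq tree) (m j : nat) : nat :=
  match cs with
  | [::] => j
  | c :: cs' => if m <= nleaves c then j else root_child_seq cs' (m - nleaves c) j.+1
  end.

Lemma lsplit_NodeE cs m : lsplit (Node cs) m = lsplit_seq [::] cs m.
Proof. by case: cs. Qed.

Lemma rsplit_NodeE cs m : rsplit (Node cs) m = rsplit_seq cs m.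
Proof. by case: cs. Qed.

Lemma root_child_NodeE cs m : root_child (Node cs) m = root_child_seq cs m 0.
Proof. by []. Qed.

Arguments lsplit : simpl never.
Arguments rsplit : simpl never.
Arguments root_child : simpl never.

Definition lgraft (ls : seq tree) (l : tree) : tree :=
  if ls is [::] then l else Node (rcons ls l).

Definition rgraft (rs : seq tree) (r : tree) : tree :=
  if rs is [::] then r else Node (r :: rs).

Definition leaf_offset (cs : seq tree) (j : nat) : nat :=
  sumn (map nleaves (take j cs)).

Section SplitAtChild.
Variables (cs : seq tree) (j m : nat).
Hypotheses (lt_j : j < size cs) (m_in : 0 < m <= nleaves (nth leaf cs j)).

Lemma lsplit_seq_offset acc :
  lsplit_seq acc cs (leaf_offset cs j + m) =
  lgraft (acc ++ take j cs) (lsplit (nth leaf cs j) m).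
Proof.
elim: cs j lt_j m_in acc => [|c cs' IH] [|j'] //= lt_j' m_in' acc.
  by rewrite /leaf_offset /= add0n (proj2 (andP m_in')) cats0; case: acc.
rewrite /leaf_offset /= -/(leaf_offset cs' j') ifF; last by lia.
by rewrite -addnA addKn IH // cat_rcons.
Qed.

Lemma lsplit_Node_offset :
  lsplit (Node cs) (leaf_offset cs j + m) = lgraft (take j cs) (lsplit (nth leaf cs j) m).
Proof. by rewrite lsplit_NodeE lsplit_seq_offset. Qed.

Lemma rsplit_Node_offset :
  rsplit (Node cs) (leaf_offset cs j + m) =
  rgraft (drop j.+1 cs) (rsplit (nth leaf cs j) m).
Proof.
rewrite rsplit_NodeE; elim: cs j lt_j m_in => [|c cs' IH] [|j'] //= lt_j' m_in'.
  by rewrite /leaf_offset /= add0n (proj2 (andP m_in')) drop0; case: cs' IH lt_j'.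
rewrite /leaf_offset /= -/(leaf_offset cs' j') ifF; last by lia.
by rewrite -addnA addKn IH.
Qed.

Lemma root_child_Node_offset : root_child (Node cs) (leaf_offset cs j + m) = j.
Proof.
rewrite root_child_NodeE -[j in RHS]add0n; move: 0.
elim: cs j lt_j m_in => [|c cs' IH] [|j'] //= lt_j' m_in' j0.
  by rewrite /leaf_offset /= add0n (proj2 (andP m_in')) addn0.
rewrite /leaf_offset /= -/(leaf_offset cs' j') ifF; last by lia.
by rewrite -addnA addKn IH // addSnnS.
Qed.

End SplitAtChild.

Lemma count_iota_sumn_nleaves (P : pred nat) a cs :
  count P (iota a (sumn (map nleaves cs))) =
  \sum_(j < size cs) count P (iota (a + leaf_offset cs j) (nleaves (nth leaf cs j))).
Proof.
elim: cs a => [|c cs IH] a /=; first by rewrite big_ord0.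
rewrite iotaD count_cat big_ord_recl /leaf_offset /= addn0 IH.
by congr (_ + _); apply: eq_bigr => j _; rewrite addnA.
Qed.

Lemma count_split_Node cs (F : tree -> tree -> nat -> bool) : cs != [::] ->
  count (fun m => F (lsplit (Node cs) m) (rsplit (Node cs) m) (root_child (Node cs) m))
    (iota 1 (nleaves (Node cs))) =
  \sum_(j < size cs)
    count (fun m => F (lgraft (take j cs) (lsplit (nth leaf cs j) m))
                      (rgraft (drop j.+1 cs) (rsplit (nth leaf cs j) m)) j)
      (iota 1 (nleaves (nth leaf cs j))).
Proof.
move=> cs_nz; have -> : nleaves (Node cs) = sumn (map nleaves cs) by case: cs cs_nz.
rewrite count_iota_sumn_nleaves; apply: eq_bigr => -[j lt_j] _ /=.
rewrite addnC iotaDl count_map; apply: eq_in_count => m.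
rewrite mem_iota add1n ltnS => m_in /=.
by rewrite lsplit_Node_offset // rsplit_Node_offset // root_child_Node_offset.
Qed.

Lemma count_split_Node_at cs j u v : j < size cs ->
  count (fun m => [&& lsplit (Node cs) m == u, rsplit (Node cs) m == v
                   & root_child (Node cs) m == j]) (iota 1 (nleaves (Node cs))) =
  count (fun m => (lgraft (take j cs) (lsplit (nth leaf cs j) m) == u) &&
                  (rgraft (drop j.+1 cs) (rsplit (nth leaf cs j) m) == v))
    (iota 1 (nleaves (nth leaf cs j))).
Proof.
move=> lt_j; have cs_nz : cs != [::] by case: cs lt_j.
rewrite (count_split_Node cs (fun l r i => [&& l == u, r == v & i == j])) //.
under eq_bigr do rewrite count_and3r.
rewrite (bigD1 (Ordinal lt_j)) //= eqxx mul1n big1 ?addn0 // => i.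
by rewrite -val_eqE /= => /negbTE ->.
Qed.

Lemma lgraft_eq_leaf ls l : (lgraft ls l == leaf) = (ls == [::]) && (l == leaf).
Proof. by case: ls => //= c ls; rewrite eq_Node; case: ls. Qed.

Lemma rgraft_eq_leaf rs r : (rgraft rs r == leaf) = (rs == [::]) && (r == leaf).
Proof. by case: rs => //= c rs; rewrite eq_Node. Qed.

Lemma lgraft_eq_Node ls l us : ls != [::] -> us != [::] ->
  (lgraft ls l == Node us) = (ls == init_ch us) && (l == last_ch us).
Proof.
move=> ls_nz us_nz; have -> : lgraft ls l = Node (rcons ls l) by case: ls ls_nz.
by rewrite eq_Node -{1}(rcons_init_last us_nz) eqseq_rcons.
Qed.

Lemma rgraft_eq_Node rs r vs : rs != [::] -> vs != [::] ->
  (rgraft rs r == Node vs) = (r == first_ch vs) && (rs == behead vs).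
Proof. by case: rs => // c rs _; case: vs => // b vs _; rewrite /= eq_Node eqseq_cons. Qed.

Lemma lgraft_take_nth s j : 0 < j < size s ->
  lgraft (take j s) (nth leaf s j) = Node (take j.+1 s).
Proof.
case/andP=> j_gt0 lt_j; rewrite (take_nth leaf lt_j).
have : take j s != [::] by rewrite -size_eq0 size_takel ?(ltnW lt_j) // -lt0n.
by case: (take j s).
Qed.

Lemma count_graft_eq_Node c ls rs us vs :
  ls != [::] -> rs != [::] -> us != [::] -> vs != [::] ->
  count (fun m => (lgraft ls (lsplit c m) == Node us) &&
                  (rgraft rs (rsplit c m) == Node vs)) (iota 1 (nleaves c)) =
  ((ls == init_ch us) && (rs == behead vs)) *
  count (fun m => (lsplit c m == last_ch us) && (rsplit c m == first_ch vs))
    (iota 1 (nleaves c)).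
Proof.
move=> ls_nz rs_nz us_nz vs_nz; rewrite -count_andl; apply: eq_count => m.
rewrite lgraft_eq_Node // rgraft_eq_Node //.
by case: (ls == _); case: (rs == _); rewrite ?andbT ?andbF.
Qed.

Lemma count_lsplit_leaf t (Q : pred tree) : wf t ->
  count (fun m => (lsplit t m == leaf) && Q (rsplit t m)) (iota 1 (nleaves t)) = Q t.
Proof.
elim/tree_ind': t Q => -[|c cs] IH Q wf_t; first by rewrite /= addn0.
have cs_nz : cs != [::] by case/andP: wf_t; case: cs IH.
rewrite (count_split_Node _ (fun l r _ => (l == leaf) && Q r)) //.
rewrite big_ord_recl big1 => [|j _]; last first.
  by rewrite count_eq_pred0 // => m; rewrite lgraft_eq_leaf.
rewrite addn0 /= drop0 (IH c (or_introl erefl) (fun r => Q (rgraft cs r))).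
  by case: cs cs_nz {IH wf_t}.
exact: wf_child wf_t (mem_head _ _).
Qed.

Lemma count_rsplit_leaf t (Q : pred tree) : wf t ->
  count (fun m => Q (lsplit t m) && (rsplit t m == leaf)) (iota 1 (nleaves t)) = Q t.
Proof.
elim/tree_ind': t Q => -[|c cs] IH Q wf_t; first by rewrite /= addn0 andbT.
have cs_nz : cs != [::] by case/andP: wf_t; case: cs IH.
rewrite (count_split_Node _ (fun l r _ => Q l && (r == leaf))) //.
rewrite big_ord_recr big1 => [|j _]; last first.
  have /negbTE drop_nz : drop j.+1 (c :: cs) != [::].
    by rewrite drop_eq_nil -ltnNge ltnS ltn_ord.
  by rewrite count_eq_pred0 // => m; rewrite rgraft_eq_leaf drop_nz andbF.
rewrite Monoid.simpm (_ : ord_max = size cs :> nat) // drop_oversize //.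
have c_k_in : nth leaf (c :: cs) (size cs) \in c :: cs by rewrite mem_nth.
rewrite (IH _ (mem_In c_k_in) (fun l => Q (lgraft (take (size cs) (c :: cs)) l))).
  by rewrite lgraft_take_nth ?take_oversize // ltnSn andbT lt0n size_eq0.
exact: wf_child wf_t c_k_in.
Qed.

(* [count_mem t (star u v)] is the coefficient of [u (x) v] in [Delta(t)]. *)
Definition star_lightning (t : tree) : Prop :=
  forall u v, wf u -> wf v ->
  count_mem t (star u v) =
  count (fun m => (lsplit t m == u) && (rsplit t m == v)) (iota 1 (nleaves t)).

Lemma count_star_leafl t v : wf t ->
  count_mem t (star leaf v) =
  count (fun m => (lsplit t m == leaf) && (rsplit t m == v)) (iota 1 (nleaves t)).
Proof.
by move=> wf_t; rewrite star_leafl (count_lsplit_leaf _ (pred1 v)) //= addn0 eq_sym.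
Qed.

Lemma count_star_leafr t u : wf t ->
  count_mem t (star u leaf) =
  count (fun m => (lsplit t m == u) && (rsplit t m == leaf)) (iota 1 (nleaves t)).
Proof.
by move=> wf_t; rewrite star_leafr (count_rsplit_leaf _ (pred1 u)) //= addn0 eq_sym.
Qed.

Section RootVertex.
Variable cs : seq tree.
Hypotheses (wf_t : wf (Node cs)) (cs_nz : cs != [::]).
Hypothesis IH : forall c, c \in cs -> star_lightning c.
Local Notation k := (size cs).-1.

Fact size_gt1 : 1 < size cs.
Proof. exact: wf_size_gt1. Qed.

Fact k_gt0 : 0 < k.
Proof. by have := size_gt1; case: (size cs) => // -[]. Qed.

Fact lt_k : k < size cs.
Proof. by have := size_gt1; case: (size cs). Qed.

Fact take_neq_nil j : 0 < j -> take j cs != [::].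
Proof. by move=> j_gt0; rewrite take_eq_nil (negbTE cs_nz) orbF gtn_eqF. Qed.

Fact drop_neq_nil j : j < k -> drop j.+1 cs != [::].
Proof. by rewrite ltn_predRL drop_eq_nil -ltnNge. Qed.

Fact lgraft_take_neq_leaf j l : 0 < j -> (lgraft (take j cs) l == leaf) = false.
Proof. by move/take_neq_nil/negbTE => take_nz; rewrite lgraft_eq_leaf take_nz. Qed.

Fact rgraft_drop_neq_leaf j r : j < k -> (rgraft (drop j.+1 cs) r == leaf) = false.
Proof. by move/drop_neq_nil/negbTE => drop_nz; rewrite rgraft_eq_leaf drop_nz. Qed.

Lemma count_prec_Node u v : wf u -> wf v ->
  count_mem (Node cs) (prec u v) =
  count (fun m => [&& lsplit (Node cs) m == u, rsplit (Node cs) m == v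
                   & root_child (Node cs) m == k]) (iota 1 (nleaves (Node cs))).
Proof.
move=> wf_u wf_v; rewrite count_split_Node_at ?lt_k //.
case: u wf_u => -[|a l] wf_u.
  rewrite prec_leafl [RHS]count_eq_pred0 // => m.
  by rewrite lgraft_take_neq_leaf ?k_gt0.
set us := a :: l.
rewrite drop_oversize ?prednK ?(ltnW size_gt1) // -/(init_ch cs) nth_last -/(last_ch cs).
rewrite precE // count_map.
rewrite (@eq_count _ _ (fun z => (init_ch cs == init_ch us) && pred1 (last_ch cs) z)).
  rewrite count_andl IH ?mem_last_ch ?(wf_child wf_u (mem_last_ch us isT)) //.
  have init_nz : init_ch cs != [::] by rewrite -size_eq0 size_init_ch -lt0n k_gt0.
  by rewrite -count_andl; apply: eq_count => m; rewrite lgraft_eq_Node // andbA.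
by move=> z; rewrite /= eq_Node -{1}(rcons_init_last cs_nz) eqseq_rcons eq_sym.
Qed.

Lemma count_succ_Node u v : wf u -> wf v ->
  count_mem (Node cs) (succ u v) =
  count (fun m => [&& lsplit (Node cs) m == u, rsplit (Node cs) m == v
                   & root_child (Node cs) m == 0]) (iota 1 (nleaves (Node cs))).
Proof.
move=> wf_u wf_v; rewrite count_split_Node_at ?(ltnW size_gt1) //.
case: v wf_v => -[|b l] wf_v.
  rewrite succ_leafr [RHS]count_eq_pred0 // => m.
  by rewrite rgraft_drop_neq_leaf ?k_gt0 ?andbF.
set vs := b :: l.
rewrite take0 drop1 nth0 -/(first_ch cs) succE // count_map.
rewrite (@eq_count _ _ (fun z => (behead cs == behead vs) && pred1 (first_ch cs) z)).
  rewrite count_andl IH ?mem_first_ch ?(wf_child wf_v (mem_first_ch vs isT)) //.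
  have behead_nz : behead cs != [::] by rewrite -size_eq0 size_behead -lt0n k_gt0.
  rewrite -count_andl; apply: eq_count => m; rewrite rgraft_eq_Node //.
  by case: (behead cs == behead vs); rewrite ?andbT ?andbF.
by move=> z; rewrite /= eq_Node -{1}(first_ch_behead cs_nz) eqseq_cons andbC eq_sym.
Qed.

Lemma count_dotp_Node_Node us vs : wf (Node us) -> wf (Node vs) ->
  us != [::] -> vs != [::] ->
  count_mem (Node cs) (dotp (Node us) (Node vs)) =
  \sum_(j < size cs) (0 < j < k) *
    count (fun m => (lgraft (take j cs) (lsplit (nth leaf cs j) m) == Node us) &&
                    (rgraft (drop j.+1 cs) (rsplit (nth leaf cs j) m) == Node vs))
      (iota 1 (nleaves (nth leaf cs j))).
Proof.
move=> wf_u wf_v us_nz vs_nz.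
have bvs_nz : behead vs != [::].
  by rewrite -size_eq0 size_behead -lt0n ltn_predRL (wf_size_gt1 wf_v).
(* [Node cs] occurs in [dotp (Node us) (Node vs)] only if
   [cs = init_ch us ++ z :: behead vs], which makes [z] the child of index [i]. *)
set i := size (init_ch us).
set bi := (take i cs == init_ch us) && (drop i.+1 cs == behead vs).
rewrite dotpE // count_map.
rewrite (@eq_count _ _ (fun z => bi && pred1 (nth leaf cs i) z)); last first.
  move=> z; rewrite /= eq_Node eq_sym (eq_cat_cons _ leaf) // /bi.
  by case: (take _ _ == _); case: (drop _ _ == _); rewrite ?andbT ?andbF // eq_sym.
have bj_eq (j : 'I_(size cs)) :
    (take j cs == init_ch us) && (drop j.+1 cs == behead vs) = (j == i :> nat) && bi.
  apply/idP/idP => [/andP[/eqP take_j /eqP drop_j] | /andP[/eqP-> //]].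
  have ji : j = i :> nat by rewrite /i -take_j size_takel // ltnW.
  by rewrite ji eqxx /bi -ji take_j drop_j !eqxx.
rewrite count_andl; case: (boolP bi) => [bi_true | /negbTE bi_false]; last first.
  rewrite mul0n big1 // => j _; case/boolP: (0 < j < k); last by rewrite mul0n.
  case/andP=> /take_neq_nil take_nz /drop_neq_nil drop_nz.
  by rewrite count_graft_eq_Node // bj_eq bi_false andbF mul0n muln0.
have [_ /eqP drop_i] := andP bi_true.
have i_lt_k : i < k by rewrite ltn_predRL ltnNge -drop_eq_nil drop_i.
have i_gt0 : 0 < i by rewrite /i size_init_ch ltn_predRL (wf_size_gt1 wf_u).
have lt_i : i < size cs := ltn_trans i_lt_k lt_k.
rewrite (bigD1 (Ordinal lt_i)) //= big1 => [|j]; last first.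
  rewrite -val_eqE /= => /negbTE ne_ji; case/boolP: (0 < j < k); last by rewrite mul0n.
  case/andP=> /take_neq_nil take_nz /drop_neq_nil drop_nz.
  by rewrite count_graft_eq_Node // bj_eq ne_ji mul0n muln0.
rewrite i_gt0 i_lt_k addn0 count_graft_eq_Node ?take_neq_nil ?drop_neq_nil //.
rewrite -/bi bi_true !mul1n IH ?mem_nth //.
  exact: wf_child wf_u (mem_last_ch us us_nz).
exact: wf_child wf_v (mem_first_ch vs vs_nz).
Qed.

Lemma count_dotp_Node u v : wf u -> wf v ->
  count_mem (Node cs) (dotp u v) =
  count (fun m => [&& lsplit (Node cs) m == u, rsplit (Node cs) m == v
                   & 0 < root_child (Node cs) m < k]) (iota 1 (nleaves (Node cs))).
Proof.
move=> wf_u wf_v.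
rewrite (count_split_Node cs (fun l r j => [&& l == u, r == v & 0 < j < k])) //.
under eq_bigr do rewrite count_and3r.
case: u wf_u => -[|a l] wf_u.
  rewrite dotp_leafl big1 // => j _; case/boolP: (0 < j < k); last by rewrite mul0n.
  by case/andP=> j_gt0 _; rewrite count_eq_pred0 // => m; rewrite lgraft_take_neq_leaf.
case: v wf_v => -[|b l'] wf_v; last exact: count_dotp_Node_Node.
rewrite dotp_leafr big1 // => j _; case/boolP: (0 < j < k); last by rewrite mul0n.
by case/andP=> _ j_lt; rewrite count_eq_pred0 // => m; rewrite rgraft_drop_neq_leaf ?andbF.
Qed.

Lemma count_star_Node u v : wf u -> wf v ->
  count_mem (Node cs) (star u v) =
  count (fun m => (lsplit (Node cs) m == u) && (rsplit (Node cs) m == v))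
    (iota 1 (nleaves (Node cs))).
Proof.
case: u => -[|a l] wf_u wf_v; first exact: count_star_leafl.
case: v wf_v => -[|b l'] wf_v; first exact: count_star_leafr.
rewrite star_Node // !count_cat count_prec_Node // count_dotp_Node // count_succ_Node //.
rewrite (count_split_Node cs (fun l r j => [&& l == _, r == _ & j == k])) //.
rewrite (count_split_Node cs (fun l r j => [&& l == _, r == _ & 0 < j < k])) //.
rewrite (count_split_Node cs (fun l r j => [&& l == _, r == _ & j == 0])) //.
rewrite (count_split_Node cs (fun l r _ => (l == _) && (r == _))) //.
rewrite -!big_split; apply: eq_bigr => j _ /=; rewrite !count_and3r -!mulnDl.
suff -> : (j == k :> nat) + ((0 < j < k) + (j == 0 :> nat)) = 1 by rewrite mul1n.
have le_jk : j <= k by rewrite -ltnS prednK ?(ltnW size_gt1).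
case: (posnP j) => [-> | j_gt0]; first by rewrite eq_sym (gtn_eqF k_gt0).
by rewrite addn0; case: ltngtP le_jk.
Qed.

End RootVertex.

Lemma star_lightning_wf t : wf t -> star_lightning t.
Proof.
elim/tree_ind': t => cs IH wf_t u v wf_u wf_v.
have [-> | cs_nz] := eqVneq cs [::]; last first.
  apply: count_star_Node => // c c_in.
  exact: IH (mem_In c_in) (wf_child wf_t c_in).
case: u wf_u => -[|a l] wf_u; first exact: count_star_leafl.
case: v wf_v => -[|b l'] wf_v; first exact: count_star_leafr.
by rewrite (count_memPn (leaf_notin_star _ _ _ _)) //= lsplit_NodeE /= eq_Node.
Qed.
Theorem mainTheorem10 (K : fieldType) (t : tree) :
  wf t -> t != leaf ->
  let N := nleaves t in
  let k := (size (children t)).-1 in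
  (* <Delta(t), u (x) v> = <t, u * v> equals the coefficient of u (x) v in
     sum_{m=1}^N ^m t (x) t^m *)
  (forall u v : tree, wf u -> wf v ->
     ((count_mem t (star u v))%:R : K)%R =
     (count (fun m => (lsplit t m == u) && (rsplit t m == v)) (iota 1 N))%:R%R)
  /\
  (* Delta_< : path leaves the root through its right-most child *)
  (forall u v : tree, wf u -> wf v -> ~~ ((u == leaf) && (v == leaf)) ->
     ((count_mem t (prec u v))%:R : K)%R =
     (count (fun m => [&& lsplit t m == u, rsplit t m == v & root_child t m == k])
        (iota 1 N))%:R%R)
  /\
  (* Delta_> : path leaves the root through its left-most child *)
  (forall u v : tree, wf u -> wf v -> ~~ ((u == leaf) && (v == leaf)) ->
     ((count_mem t (succ u v))%:R : K)%R =
     (count (fun m => [&& lsplit t m == u, rsplit t m == v & root_child t m == 0%N])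
        (iota 1 N))%:R%R)
  /\
  (* Delta_. : path leaves the root through a child neither left- nor right-most *)
  (forall u v : tree, wf u -> wf v -> ~~ ((u == leaf) && (v == leaf)) ->
     ((count_mem t (dotp u v))%:R : K)%R =
     (count (fun m => [&& lsplit t m == u, rsplit t m == v &
                          (0 < root_child t m < k)%N])
        (iota 1 N))%:R%R).
Proof.
case: t => cs wf_t t_neq_leaf N k.
have cs_nz : cs != [::] by apply: contra t_neq_leaf => /eqP ->.
have IH c : c \in cs -> star_lightning c.
  by move=> c_in; apply/star_lightning_wf/(wf_child wf_t c_in).
(* The count lemmas hold for all [u], [v]: for [u = v = |] both sides vanish. *)
split; [|split; [|split]] => u v wf_u wf_v *; congr (_%:R)%R.
- exact: star_lightning_wf.
- exact: count_prec_Node.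
- exact: count_succ_Node.
- exact: count_dotp_Node.
Qed.
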